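(* Let $\mathbf{B}$ be a 2-element algebra with universe $\{0,1\}$ such that at least one of the following holds: (1) $\mathbf{B}\preceq\boldsymbol{\bigwedge}$, (2) $\mathbf{B}\preceq\boldsymbol{\bigvee}$, or (3) $\mathbf{B}\preceq\mathsf{A}$. Let $\mathbf{A}=\mathbf{B}^n$. Then any classical algorithm which solves $\mathrm{HKP}(\mathbf{A})$ must make $\Omega(2^{n/2})$ queries to the oracle.
   Context: $\mathrm{Clo}(\mathbf{B})$ is the clone of term operations of $\mathbf{B}$ (smallest set of operations on $\{0,1\}$ containing the basic operations and projections, closed under composition). For a clone $\mathcal{C}$ on $\{0,1\}$, $\mathbf{B}\preceq\mathcal{C}$ means $\mathrm{Clo}(\mathbf{B})\subseteq\mathcal{C}$. $\boldsymbol{\bigwedge}$ is the clone generated by $x\wedge y$ and the constants $0,1$; $\boldsymbol{\bigvee}$ is the clone generated by $x\vee y$ and the constants $0,1$; $\mathsf{A}$ is the clone generated by $x\leftrightarrow y$ (the operation equal to $1$ iff $x=y$) and the constant $0$. $\mathbf{B}^n$ is the direct power with coordinatewise operations. A congruence is an equivalence relation compatible with all operations; $\ker(\phi)=\{(a,b):\phi(a)=\phi(b)\}$. The Hidden Kernel Problem $\mathrm{HKP}(\mathbf{A})$: given a similar algebra $\mathbf{C}$ and a homomorphism $\phi:\mathbf{A}\to\mathbf{C}$ accessible only as an oracle, determine the congruence $\ker(\phi)$. *)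

From mathcomp Require Import all_boot.
Set Implicit Arguments. Unset Strict Implicit. Unset Printing Implicit Defensive.

Structure signature := Sig { sym : Type ; arity : sym -> nat }.

Definition ops (s : signature) (T : Type) :=
  forall i : sym s, ('I_(arity i) -> T) -> T.

Definition pow_ops (s : signature) (n : nat) (opB : ops s bool)
  : ops s {ffun 'I_n -> bool} :=
  fun i args => [ffun j => opB i (fun k => args k j)].

Definition is_hom (s : signature) (TA TC : Type) (opA : ops s TA)
  (opC : ops s TC) (f : TA -> TC) : Prop :=
  forall (i : sym s) (args : 'I_(arity i) -> TA),
    f (opA i args) = opC i (fun k => f (args k)).

Inductive term (s : signature) (k : nat) : Type :=
| Var of 'I_k
| App (i : sym s) of ('I_(arity i) -> term s k).

Fixpoint eval (s : signature) (T : Type) (op : ops s T) (k : nat)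
  (x : 'I_k -> T) (t : term s k) : T :=
  match t with
  | Var j => x j
  | App i ts => op i (fun l => eval op x (ts l))
  end.

(** [in_clo op k f]: the k-ary operation f on {0,1} belongs to Clo(op), the
    clone generated by the basic operations op (= term operations). *)
Definition in_clo (s : signature) (op : ops s bool) (k : nat)
  (f : ('I_k -> bool) -> bool) : Prop :=
  exists t : term s k, forall x, eval op x t = f x.

Definition clone_le (s s' : signature) (opB : ops s bool) (opG : ops s' bool)
  : Prop :=
  forall (k : nat) (f : ('I_k -> bool) -> bool), in_clo opB f -> in_clo opG f.

(** Generators of the clone /\ : x /\ y and the constants 0, 1. *)
Inductive meet_sym := MAnd | MZero | MOne.
Definition meet_ar (i : meet_sym) : nat :=
  match i with MAnd => 2 | _ => 0 end.
Definition meet_sig := Sig meet_ar.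
Definition meet_ops : ops meet_sig bool :=
  fun i => match i return ('I_(meet_ar i) -> bool) -> bool with
  | MAnd => fun a => a ord0 && a ord_max
  | MZero => fun _ => false
  | MOne => fun _ => true
  end.

(** Generators of the clone \/ : x \/ y and the constants 0, 1. *)
Inductive join_sym := JOr | JZero | JOne.
Definition join_ar (i : join_sym) : nat :=
  match i with JOr => 2 | _ => 0 end.
Definition join_sig := Sig join_ar.
Definition join_ops : ops join_sig bool :=
  fun i => match i return ('I_(join_ar i) -> bool) -> bool with
  | JOr => fun a => a ord0 || a ord_max
  | JZero => fun _ => false
  | JOne => fun _ => true
  end.

(** Generators of the clone A : x <-> y (1 iff x = y) and the constant 0. *)
Inductive aff_sym := AIff | AZero.
Definition aff_ar (i : aff_sym) : nat :=
  match i with AIff => 2 | AZero => 0 end.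
Definition aff_sig := Sig aff_ar.
Definition aff_ops : ops aff_sig bool :=
  fun i => match i return ('I_(aff_ar i) -> bool) -> bool with
  | AIff => fun a => a ord0 == a ord_max
  | AZero => fun _ => false
  end.

(** The history
    after t queries is the sequence of pairs (a_j, r_j) where a_j is the j-th
    query and r_j is the oracle's answer, recorded as the index of the first
    query a_l (l <= j) with phi a_l = phi a_j (the answers are opaque labels
    of elements of C; only their equality pattern is observable). *)
Record det_alg (A : Type) := DetAlg {
  step : seq (A * nat) -> A;
  output : seq (A * nat) -> A -> A -> bool
}.

Fixpoint history (A : Type) (TC : eqType) (alg : det_alg A) (phi : A -> TC)
  (q : nat) : seq (A * nat) :=
  match q with
  | 0 => [::]
  | q'.+1 =>
      let h := history alg phi q' in
      let a := step alg h in
      rcons h (a, find (fun b => phi b == phi a) (rcons (map fst h) a))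
  end.

Definition correct (A : finType) (TC : eqType) (alg : det_alg A) (q : nat)
  (phi : A -> TC) : bool :=
  [forall a : A, forall b : A,
     output alg (history alg phi q) a b == (phi a == phi b)].

(** A randomized algorithm with random seed drawn uniformly from the nonempty
    finite type S, making q queries, solves HKP(A) (A with operations opA)
    with success probability >= 2/3 on every instance (C, phi). *)
Definition solves_HKP (s : signature) (TA : finType) (opA : ops s TA)
  (S : finType) (alg : S -> det_alg TA) (q : nat) : Prop :=
  0 < #|S| /\
  forall (TC : eqType) (opC : ops s TC) (phi : TA -> TC),
    is_hom opA opC phi ->
    2 * #|S| <= 3 * #|[pred r : S | correct (alg r) q phi]|.

From mathcomp Require Import all_boot zify.
From Stdlib Require Import FunctionalExtensionality.
Set Implicit Arguments. Unset Strict Implicit. Unset Printing Implicit Defensive.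

(* Since Clo(B) lies inside the clone G generated by the basic operations
   (/\, \/ or <->), every congruence of the power G^n is a congruence of B^n,
   and every congruence theta of B^n is the kernel of a homomorphism (the
   quotient map), hence an instance of HKP.

   Take distinct congruences theta_i (i in I) that agree with one fixed
   equivalence theta_0 except on few pairs, so that any q queries can tell
   theta_i from theta_0 for at most M indices i.  For a fixed random seed, the
   run against any theta_i not told apart is the run against theta_0, so it
   outputs the same relation and is correct for at most one such i: each seed
   is correct on at most M + 1 instances.  Averaging over the seeds, success
   probability 2/3 on every instance forces 2 |I| <= 3 (M + 1).

   For <->, theta_u identifies x with x + u (over GF(2)): 2^n congruences, and
   q queries tell apart at most q^2 of them, as u must be a difference of two
   queries.  For /\, fix a level k of Hamming weight holding at least
   2^n / (n + 1) vectors and, for each g of weight k, collapse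
   {g} U {x | weight x < k} to a single class; this set absorbs meets, and q
   queries tell apart only the g they contain.  The case \/ is dual, counting
   zeros instead of ones.  Both bounds give 2^n = O(q^2). *)

Definition equivalence (T : Type) (E : rel T) :=
  [/\ reflexive E, symmetric E & transitive E].

Definition compatible (s : signature) (T : Type) (op : ops s T) (E : rel T) :=
  forall i (a a' : 'I_(arity i) -> T), (forall k, E (a k) (a' k)) ->
    E (op i a) (op i a').

Section Quotient.
Variables (T : finType) (E : rel T).
Hypothesis E_equiv : equivalence E.

(* The quotient algebra is realized on T itself, through a chosen
   representative of each class. *)
Definition rep (x : T) : T := odflt x [pick y | E x y].

Lemma rep_spec x : E x (rep x).
Proof.
have [E_refl _ _] := E_equiv.
by rewrite /rep; case: pickP => [y //|_]; apply: E_refl.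
Qed.

Lemma rep_eq x y : (rep x == rep y) = E x y.
Proof.
have [E_refl E_sym E_trans] := E_equiv.
apply/eqP/idP => [rep_xy | Exy].
  by apply: (E_trans (rep x)); rewrite ?rep_spec // rep_xy E_sym rep_spec.
have same_class : E x =1 E y by move=> z; apply/idP/idP; apply: E_trans; rewrite // E_sym.
rewrite /rep (eq_pick same_class); case: pickP => // no_y.
by have := no_y y; rewrite /= E_refl.
Qed.

Lemma rep_hom (s : signature) (op : ops s T) :
  compatible op E -> is_hom op (fun i a => rep (op i a)) rep.
Proof.
by move=> E_compat i a; apply/eqP; rewrite rep_eq; apply: E_compat => k; apply: rep_spec.
Qed.

End Quotient.

Definition collapse (T : eqType) (D : pred T) : rel T :=
  fun x y => (x == y) || (x \in D) && (y \in D).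

Lemma collapse_equiv (T : eqType) (D : pred T) : equivalence (collapse D).
Proof.
split=> [x | x y | y x z]; rewrite /collapse ?eqxx //; first by rewrite eq_sym andbC.
case/predU1P => [-> // | /andP[xD yD]] /predU1P[<- | /andP[_ zD]].
  by rewrite xD yD orbT.
by rewrite xD zD orbT.
Qed.

Definition absorbing (s : signature) (T : Type) (op : ops s T) (D : pred T) :=
  forall i (a : 'I_(arity i) -> T) k, a k \in D -> op i a \in D.

Lemma collapse_compatible (s : signature) (T : eqType) (op : ops s T) (D : pred T) :
  absorbing op D -> compatible op (collapse D).
Proof.
move=> absorbs i a a' rel_a; case: (pickP [pred k | a k \in D]) => [k /= akD | outD].
  have a'kD : a' k \in D by case/predU1P: (rel_a k) => [<- | /andP[]].
  by rewrite /collapse (absorbs _ _ _ akD) (absorbs _ _ _ a'kD) orbT.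
suff -> : a' = a by rewrite /collapse eqxx.
apply: functional_extensionality => k.
by case/predU1P: (rel_a k) => [// | /andP[akD _]]; move: (outD k); rewrite /= akD.
Qed.

Lemma eval_compatible (s : signature) (T : Type) (op : ops s T) (E : rel T) k
    (t : term s k) :
  compatible op E ->
  forall x x', (forall l, E (x l) (x' l)) -> E (eval op x t) (eval op x' t).
Proof.
by move=> E_compat; elim: t => [j|i ts IHts] x x' Exx' //=; apply: E_compat => l; apply: IHts.
Qed.

Lemma eval_pow_ops (s : signature) n (op : ops s bool) k (t : term s k)
    (x : 'I_k -> {ffun 'I_n -> bool}) :
  eval (pow_ops op) x t = [ffun j => eval op (fun l => x l j) t].
Proof.
elim: t x => [j|i ts IHts] x /=; apply/ffunP => j'; rewrite !ffunE //.
by congr (op i); apply: functional_extensionality => l; rewrite IHts ffunE.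
Qed.

Lemma clone_le_compatible (s s' : signature) (opB : ops s bool) (opG : ops s' bool) n
    (E : rel {ffun 'I_n -> bool}) :
  clone_le opB opG -> compatible (pow_ops opG) E -> compatible (pow_ops opB) E.
Proof.
move=> le_BG G_compat i a a' Eaa'.
have [t opBE] : in_clo opG (opB i) by apply: le_BG; exists (App (@Var s _)).
have pow_opBE (b : _ -> {ffun 'I_n -> bool}) :
    pow_ops opB (i:=i) b = eval (pow_ops opG) b t.
  by rewrite eval_pow_ops; apply/ffunP => j; rewrite !ffunE opBE.
by rewrite !pow_opBE; apply: eval_compatible.
Qed.

Lemma size_history (A : Type) (TC : eqType) (alg : det_alg A) (phi : A -> TC) q :
  size (history alg phi q) = q.
Proof. by elim: q => //= q IHq; rewrite size_rcons IHq. Qed.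

Lemma eq_history (A : eqType) (TC1 TC2 : eqType) (alg : det_alg A)
    (phi1 : A -> TC1) (phi2 : A -> TC2) q :
  {in map fst (history alg phi1 q) &,
    forall x y, (phi1 x == phi1 y) = (phi2 x == phi2 y)} ->
  history alg phi1 q = history alg phi2 q.
Proof.
elim: q => //= q IHq same_ker.
set h := history alg phi1 q; set a := step alg h.
have in_next x : x \in map fst h -> x \in rcons (map fst h) a.
  by rewrite mem_rcons inE orbC => ->.
rewrite map_rcons /= -/h -/a in same_ker.
rewrite -IHq => [|x y hx hy]; last by apply: same_ker; apply: in_next.
congr (rcons _ (_, _)); apply: eq_in_find => x hx /=.
by apply: same_ker; rewrite // mem_rcons mem_head.
Qed.

Lemma double_count (S I : finType) (A : {set I}) (P : S -> I -> bool) (a b m : nat) :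
  0 < #|S| ->
  (forall i, i \in A -> a * #|S| <= b * #|[pred r | P r i]|) ->
  (forall r, #|[pred i in A | P r i]| <= m) ->
  a * #|A| <= b * m.
Proof.
move=> S_gt0 many few.
have swap : \sum_(i in A) #|[pred r | P r i]| = \sum_r #|[pred i in A | P r i]|.
  rewrite (eq_bigr (fun i => \sum_(r | P r i) 1)) => [|i _]; last by rewrite sum1_card.
  rewrite (exchange_big_dep predT) //=; apply: eq_bigr => r _.
  by rewrite -sum1_card; apply: eq_bigl => i.
rewrite -(leq_pmul2l S_gt0) mulnA mulnC (mulnC #|S|) -sum_nat_const.
apply: (@leq_trans (\sum_(i in A) b * #|[pred r | P r i]|)); first exact: leq_sum.
by rewrite -big_distrr /= swap mulnCA leq_mul2l -sum_nat_const leq_sum ?orbT.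
Qed.

Section HiddenKernelLowerBound.
Variables (s : signature) (T : finType) (opA : ops s T).
Variables (S : finType) (alg : S -> det_alg T) (q : nat).
Variables (I : finType) (A : {set I}) (E : I -> rel T) (E0 : rel T) (M : nat).
Hypothesis E_equiv : forall i, i \in A -> equivalence (E i).
Hypothesis E_compat : forall i, i \in A -> compatible opA (E i).
Hypothesis E0_equiv : equivalence E0.
Hypothesis E_inj : {in A &, forall i j, E i =2 E j -> i = j}.
Hypothesis few_visible : forall Q : seq T, size Q = q ->
  #|[set i in A | ~~ all2rel (fun x y => E i x y == E0 x y) Q]| <= M.

Lemma few_correct_instances r :
  #|[pred i in A | correct (alg r) q (rep (E i))]| <= M.+1.
Proof.
pose h0 := history (alg r) (rep E0) q; pose Q := map fst h0.
pose Vis := [set i in A | ~~ all2rel (fun x y => E i x y == E0 x y) Q].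
pose Inv := [set i in A | all2rel (fun x y => E i x y == E0 x y) Q
                        & correct (alg r) q (rep (E i))].
have Vis_le : #|Vis| <= M by apply: few_visible; rewrite size_map size_history.
have Inv_le1 : #|Inv| <= 1.
  have output_E i : i \in Inv -> E i =2 output (alg r) h0.
    rewrite inE => /and3P[iA /allrelP sameQ /forallP ok] x y.
    have -> : h0 = history (alg r) (rep (E i)) q.
      apply: eq_history => u v uQ vQ.
      by rewrite !rep_eq //; [apply/esym/eqP/sameQ | apply: E_equiv].
    by move/forallP: (ok x) => /(_ y)/eqP ->; rewrite rep_eq //; apply: E_equiv.
  apply/card_le1_eqP => i j iI jI.
  have InvA k : k \in Inv -> k \in A by rewrite inE => /andP[].
  apply: E_inj; [exact: InvA | exact: InvA |].
  by move=> x y; rewrite !output_E.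
apply: (@leq_trans #|Vis :|: Inv|).
  by apply: subset_leq_card; apply/subsetP => i; rewrite !inE; case: (i \in A); case: allrel.
by apply: leq_trans (leq_of_leqif (leq_card_setU Vis Inv)) _; rewrite -addn1 leq_add.
Qed.

Lemma many_correct_seeds i : solves_HKP opA alg q -> i \in A ->
  2 * #|S| <= 3 * #|[pred r | correct (alg r) q (rep (E i))]|.
Proof. by case=> _ solves iA; apply: solves (rep_hom (E_equiv iA) (E_compat iA)). Qed.

Lemma solves_HKP_card_le : solves_HKP opA alg q -> 2 * #|A| <= 3 * M.+1.
Proof.
move=> solves; apply: double_count solves.1 _ few_correct_instances.
by move=> i; apply: many_correct_seeds.
Qed.

End HiddenKernelLowerBound.

Section Affine.
Variable n : nat.
Local Notation vec := {ffun 'I_n -> bool}.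

Definition addv (x y : vec) : vec := [ffun j => x j (+) y j].

Definition coset_rel (u : vec) : rel vec := fun x y => (x == y) || (x == addv y u).

Lemma addvK u : cancel (addv^~ u) (addv^~ u).
Proof. by move=> x; apply/ffunP => j; rewrite !ffunE addbK. Qed.

Lemma addv0 x : addv [ffun => false] x = x.
Proof. by apply/ffunP => j; rewrite !ffunE. Qed.

Lemma coset_rel_equiv u : equivalence (coset_rel u).
Proof.
split=> [x | x y | y x z]; rewrite /coset_rel ?eqxx //.
  by apply/orP/orP => -[/eqP-> | /eqP->]; rewrite ?addvK eqxx; [left | right | left | right].
by case/orP => /eqP -> /orP[] /eqP ->; rewrite ?addvK eqxx ?orbT.
Qed.

Lemma coset_rel_compatible u : compatible (pow_ops aff_ops) (coset_rel u).
Proof.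
have [rel_refl _ rel_trans] := coset_rel_equiv u.
have iff_shift x z : [ffun j => addv x u j == z j] = addv [ffun j => x j == z j] u.
  by apply/ffunP => j; rewrite !ffunE; case: (x j); case: (u j); case: (z j).
have iff_compat_l x y z : coset_rel u x y ->
    coset_rel u [ffun j => x j == z j] [ffun j => y j == z j].
  by case/orP => /eqP ->; rewrite /coset_rel ?eqxx // iff_shift eqxx orbT.
have iff_compat_r x y z : coset_rel u x y ->
    coset_rel u [ffun j => z j == x j] [ffun j => z j == y j].
  have flip w : [ffun j => z j == w j] = [ffun j => w j == z j].
    by apply/ffunP => j; rewrite !ffunE eq_sym.
  by rewrite !flip; apply: iff_compat_l.
case=> a a' rel_a /=; last exact: rel_refl.
apply: (rel_trans [ffun j => a' ord0 j == a ord_max j]).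
  exact: iff_compat_l.
exact: iff_compat_r.
Qed.

Lemma coset_rel_inj u v : coset_rel u =2 coset_rel v -> u = v.
Proof.
have rel_0 w : coset_rel w w [ffun => false] by rewrite /coset_rel addv0 eqxx orbT.
move=> same; have := rel_0 u; have := rel_0 v.
rewrite same -same /coset_rel !addv0.
by case/orP => /eqP -> /orP[] /eqP.
Qed.

Lemma few_visible_cosets (Q : seq vec) :
  #|[set u in [set: vec] | ~~ all2rel (fun x y => coset_rel u x y == (x == y)) Q]|
    <= size Q ^ 2.
Proof.
rewrite -mulnn -(size_allpairs addv); apply: leq_trans (card_size _).
apply: subset_leq_card; apply/subsetP => u; rewrite !inE /=.
case/allPn => x xQ /allPn[y yQ]; rewrite /coset_rel.
case: (x =P y) => [-> | _]; rewrite ?eqxx //= eqbF_neg negbK => /eqP x_yu.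
apply/allpairsP; exists (x, y); split=> //=.
by apply/ffunP => j; rewrite x_yu !ffunE; case: (u j); case: (y j).
Qed.

Lemma solves_HKP_affine (s : signature) (opB : ops s bool) (S : finType)
    (alg : S -> det_alg vec) (q : nat) :
  clone_le opB aff_ops -> solves_HKP (pow_ops opB) alg q -> 2 * 2 ^ n <= 3 * (q ^ 2).+1.
Proof.
move=> le_B_aff solves.
have := @solves_HKP_card_le _ _ (pow_ops opB) _ alg q _ [set: vec] coset_rel eq_op (q ^ 2).
rewrite cardsT card_ffun card_bool card_ord; apply=> //.
- by move=> u _; apply: coset_rel_equiv.
- by move=> u _; apply: clone_le_compatible le_B_aff (@coset_rel_compatible u).
- by split=> [x | x y | y x z]; [exact: eqxx | exact: eq_sym | move=> /eqP ->].
- by move=> u v _ _; apply: coset_rel_inj.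
- by move=> Q <-; apply: few_visible_cosets.
Qed.

End Affine.

Lemma exists_large_fiber (T : finType) (f : T -> nat) (m : nat) :
  (forall x, f x <= m) -> exists k, #|T| <= m.+1 * #|[set x | f x == k]|.
Proof.
move=> f_le; pose c (k : 'I_m.+1) := #|[set x | f x == k]|.
case: (@arg_maxnP _ ord0 predT c isT) => k0 _ max_k0; exists (val k0).
have -> : #|T| = \sum_(k < m.+1) c k.
  rewrite -sum1_card (partition_big (fun x => inord (f x) : 'I_m.+1) predT) //=.
  apply: eq_bigr => k _; rewrite /c -sum1_card; apply: eq_bigl => x.
  by rewrite inE -val_eqE /= inordK ?ltnS.
apply: (@leq_trans (\sum_(k < m.+1) c k0)); first by apply: leq_sum => k _; apply: max_k0.
by rewrite sum_nat_const card_ord.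
Qed.

Section Semilattice.
Variables (n : nat) (b : bool).
Local Notation vec := {ffun 'I_n -> bool}.

Definition bsupp (x : vec) := [set j | x j == b].
Definition weight (x : vec) := #|bsupp x|.
Definition lighter (k : nat) : pred vec := [pred x | weight x < k].
Definition weight_ideal (g : vec) : pred vec :=
  [pred x | (x == g) || (weight x < weight g)].

Lemma bsupp_inj : injective bsupp.
Proof.
move=> x y /setP same; apply/ffunP => j; move: (same j); rewrite !inE.
by case: (x j); case: (y j); case: b.
Qed.

Lemma weight_le x : weight x <= n.
Proof. by rewrite -[n]card_ord max_card. Qed.

Lemma weight_ideal_downward g x y :
  bsupp y \subset bsupp x -> x \in weight_ideal g -> y \in weight_ideal g.
Proof.
move=> yx /predU1P[x_g | x_light]; last first.
  by rewrite !inE (leq_ltn_trans (subset_leq_card yx)) ?orbT.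
rewrite {}x_g in yx.
case/eqVproper: yx => [/bsupp_inj-> | /proper_card y_light]; first exact: predU1l.
by rewrite !inE y_light orbT.
Qed.

Lemma weight_ideal_absorbing (s : signature) (op : ops s vec) g :
  (forall i a k, bsupp (op i a) \subset bsupp (a k)) -> absorbing op (weight_ideal g).
Proof. by move=> shrinks i a k; apply: weight_ideal_downward. Qed.

Lemma collapse_weight_ideal_inj g h : weight g = weight h ->
  collapse (weight_ideal g) =2 collapse (weight_ideal h) -> g = h.
Proof.
move=> same_weight same_rel; pose z : vec := [ffun => ~~ b].
have z_weight : weight z = 0.
  by apply/eqP; rewrite cards_eq0; apply/eqP/setP => j; rewrite !inE ffunE; case: b.
have [g_weight | g_heavy] := posnP (weight g).
  have h_weight : weight h = 0 by rewrite -same_weight.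
  by apply: bsupp_inj; rewrite (cards0_eq g_weight) (cards0_eq h_weight).
have gz_neq : (g == z) = false by apply: contraTF g_heavy => /eqP->; rewrite z_weight.
have : collapse (weight_ideal g) g z by rewrite /collapse !inE eqxx z_weight g_heavy !orbT.
by rewrite same_rel /collapse !inE gz_neq -same_weight ltnn orbF => /andP[/eqP].
Qed.

Lemma collapse_weight_ideal_off g x y : x != g -> y != g ->
  collapse (weight_ideal g) x y = collapse (lighter (weight g)) x y.
Proof. by move=> /negbTE xg /negbTE yg; rewrite /collapse !inE xg yg. Qed.

Lemma few_visible_weight_ideals k (Q : seq vec) :
  #|[set g in [set g | weight g == k] | ~~ all2rel
      (fun x y => collapse (weight_ideal g) x y == collapse (lighter k) x y) Q]|
    <= size Q.
Proof.
apply: leq_trans (card_size Q); apply: subset_leq_card; apply/subsetP => g.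
rewrite !inE => /andP[/eqP <- /allPn[x xQ /allPn[y yQ]]] /=.
apply: contraR => gQ.
by rewrite collapse_weight_ideal_off ?eqxx //; apply: contraNneq gQ => <-.
Qed.

Lemma solves_HKP_semilattice (s : signature) (opB : ops s bool) (S : finType)
    (alg : S -> det_alg vec) (q : nat) :
  (forall g, compatible (pow_ops opB) (collapse (weight_ideal g))) ->
  solves_HKP (pow_ops opB) alg q -> 2 * 2 ^ n <= 3 * n.+1 * q.+1.
Proof.
move=> compat solves; have [k large] := exists_large_fiber weight_le.
rewrite card_ffun card_bool card_ord in large.
have few_k : 2 * #|[set g : vec | weight g == k]| <= 3 * q.+1.
  apply: (solves_HKP_card_le (E := fun g => collapse (weight_ideal g))
           (E0 := collapse (lighter k)) _ _ _ _ _ solves).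
  - by move=> g _; apply: collapse_equiv.
  - by move=> g _; apply: compat.
  - exact: collapse_equiv.
  - move=> g h; rewrite !inE => /eqP g_k /eqP h_k.
    by apply: collapse_weight_ideal_inj; rewrite g_k h_k.
  - by move=> Q <-; apply: few_visible_weight_ideals.
apply: (@leq_trans (n.+1 * (2 * #|[set g : vec | weight g == k]|))).
  by rewrite mulnCA leq_mul2l large.
by rewrite -mulnA [3 * _]mulnCA leq_mul2l few_k.
Qed.

End Semilattice.

Lemma pow_meet_bsupp n i (a : 'I_(arity i) -> {ffun 'I_n -> bool}) k :
  bsupp true (pow_ops meet_ops a) \subset bsupp true (a k).
Proof.
case: i a k => a k; try by case: k.
apply/subsetP => j; rewrite !inE ffunE /= !eqb_id.
have [-> | ->] : k = ord0 \/ k = ord_max.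
  by case: k => [[|[|//]]] k_lt; [left | right]; apply: val_inj.
all: by case/andP.
Qed.

Lemma pow_join_bsupp n i (a : 'I_(arity i) -> {ffun 'I_n -> bool}) k :
  bsupp false (pow_ops join_ops a) \subset bsupp false (a k).
Proof.
case: i a k => a k; try by case: k.
apply/subsetP => j; rewrite !inE ffunE /= !eqbF_neg negb_or.
have [-> | ->] : k = ord0 \/ k = ord_max.
  by case: k => [[|[|//]]] k_lt; [left | right]; apply: val_inj.
all: by case/andP.
Qed.

Lemma nine_sq_le_exp2 n : 11 <= n -> 9 * n.+1 ^ 2 <= 2 ^ n.
Proof.
elim: n => // n IHn; rewrite leq_eqVlt => /predU1P[<- // | n_ge].
rewrite [2 ^ _]expnS; apply: leq_trans _ (leq_mul (leqnn 2) (IHn n_ge)); nia.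
Qed.

Lemma affine_bound n q : 0 < n -> 2 * 2 ^ n <= 3 * (q ^ 2).+1 -> 2 ^ n <= 3 * q ^ 2.
Proof.
move=> n_gt0; have : 2 <= 2 ^ n by rewrite -{1}(expn1 2) leq_pexp2l.
move: (2 ^ n) (q ^ 2) => X Y; lia.
Qed.

Lemma semilattice_bound n q :
  11 <= n -> 2 * 2 ^ n <= 3 * n.+1 * q.+1 -> 2 ^ n <= 3 * q ^ 2.
Proof.
move/nine_sq_le_exp2; move: (2 ^ n) => X big bound.
have q_gt0 : 0 < q by case: q bound => // bound; nia.
have X_le : X <= 3 * n.+1 * q by nia.
have : X * X <= X * q ^ 2.
  apply: (@leq_trans (9 * n.+1 ^ 2 * q ^ 2)); last by rewrite leq_mul2r big orbT.
  by rewrite -[9]/(3 ^ 2) -!expnMn expnS expn1 leq_mul.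
case: X {big bound X_le} => // X; rewrite leq_pmul2l // => /leq_trans; apply.
by rewrite leq_pmull.
Qed.

Theorem theorem5p1 (s : signature) (opB : ops s bool) :
  clone_le opB meet_ops \/ clone_le opB join_ops \/ clone_le opB aff_ops ->
  exists c N : nat, forall n : nat, N <= n ->
    forall (S : finType) (alg : S -> det_alg {ffun 'I_n -> bool}) (q : nat),
      solves_HKP (pow_ops (n:=n) opB) alg q ->
      2 ^ n <= c * q ^ 2.
Proof.
move=> clone; exists 3, 11 => n n_ge S alg q solves.
case: clone => [le_meet | [le_join | le_aff]].
- apply: semilattice_bound n_ge _; apply: (solves_HKP_semilattice (b := true)) solves => g.
  apply: clone_le_compatible le_meet (collapse_compatible _).
  exact: weight_ideal_absorbing (@pow_meet_bsupp n).
- apply: semilattice_bound n_ge _; apply: (solves_HKP_semilattice (b := false)) solves => g.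
  apply: clone_le_compatible le_join (collapse_compatible _).
  exact: weight_ideal_absorbing (@pow_join_bsupp n).
- by apply: affine_bound (solves_HKP_affine le_aff solves); apply: leq_trans n_ge.
Qed.
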